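(* Let $G$ be a connected graph with $n\geq 2$ vertices and $m$ edges. Then for every integer $k\geq 0$, $$R(S^k(G))=2^kR(G)+\frac{4^{k}-2^{k}}{2}R^+(G)+\frac{8^{k}-2\cdot 4^{k}+2^{k}}{4}R^*(G)+\frac{8^k-2^k}{12}m(2m-2n+1)-\frac{4^k-1}{6}(m-n)(m-n+1).$$
   Context: All graphs are finite, undirected, without loops or multiple edges. For a connected graph $H$ and vertices $i,j$, the resistance distance $\Omega_{ij}$ is the effective resistance between $i$ and $j$ in the electrical network obtained from $H$ by replacing each edge by a unit resistor. With $d_i$ the degree of vertex $i$ in $H$ and sums over unordered pairs of distinct vertices of $H$: $R(H)=\sum_{\{i,j\}\subseteq V(H)}\Omega_{ij}$ (Kirchhoff index), $R^+(H)=\sum_{\{i,j\}\subseteq V(H)}(d_i+d_j)\Omega_{ij}$ (additive degree-Kirchhoff index), and $R^*(H)=\sum_{\{i,j\}\subseteq V(H)}d_id_j\Omega_{ij}$ (multiplicative degree-Kirchhoff index). The subdivision $S(H)$ is the graph obtained from $H$ by replacing every edge with a path of length two. Iterated subdivisions: $S^0(G)=G$ and $S^k(G)=S(S^{k-1}(G))$ for $k\geq1$. *)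

From HB Require Import structures.
From mathcomp Require Import all_boot all_order all_algebra.
Set Implicit Arguments. Unset Strict Implicit. Unset Printing Implicit Defensive.
Import Order.TTheory GRing.Theory Num.Theory.
Local Open Scope ring_scope.

Record graph := Graph { nv : nat; adj : rel 'I_nv }.
Arguments adj : clear implicits.
Arguments Graph : clear implicits.

(* simple graph: symmetric, irreflexive adjacency (no loops, no multi-edges
   since adjacency is a relation) *)
Definition simple (G : graph) : Prop :=
  symmetric (adj G) /\ irreflexive (adj G).

Definition connected (G : graph) : Prop :=
  forall i j : 'I_(nv G), connect (adj G) i j.

(* edge set: unordered pairs {i,j}, represented by (i,j) with i < j *)
Definition edges (G : graph) : {set 'I_(nv G) * 'I_(nv G)} :=
  [set p : 'I_(nv G) * 'I_(nv G) | ((val p.1 < val p.2)%N && adj G p.1 p.2)].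

Definition ne (G : graph) : nat := #|edges G|.

Definition deg (G : graph) (i : 'I_(nv G)) : nat := #|[set j | adj G i j]|.

(* subdivision: vertices 'I_(n + m); the first n are the old vertices,
   vertex n + e is the new vertex placed on edge e (the e-th element of
   enum (edges G)), adjacent exactly to the two endpoints of e. *)
Definition sub_adj (G : graph) : rel 'I_(nv G + #|edges G|) :=
  fun x y =>
    match split x, split y with
    | inl a, inr e => (a == (enum_val e).1) || (a == (enum_val e).2)
    | inr e, inl a => (a == (enum_val e).1) || (a == (enum_val e).2)
    | _, _ => false
    end.

Definition subdiv (G : graph) : graph := Graph _ (@sub_adj G).

Definition subdiv_iter (k : nat) (G : graph) : graph := iter k subdiv G.

Definition lap (R : fieldType) (G : graph) : 'M[R]_(nv G) :=
  \matrix_(i, j) ((i == j)%:R * (deg i)%:R - (adj G i j)%:R).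

(* Resistance distance (effective resistance with unit resistors):
   inject a unit current at i and extract it at j; the vertex potentials v
   satisfy Kirchhoff's laws  v L = e_i - e_j  (L symmetric); we take the
   solution given by pinvmx, and Omega_ij is the potential difference
   v_i - v_j (independent of the chosen solution when G is connected). *)
Definition resistance (R : fieldType) (G : graph) (i j : 'I_(nv G)) : R :=
  let b : 'rV[R]_(nv G) := delta_mx 0 i - delta_mx 0 j in
  let v := b *m pinvmx (lap R G) in
  v 0 i - v 0 j.

Definition kirchhoff (R : fieldType) (G : graph) : R :=
  \sum_(i < nv G) \sum_(j < nv G | (i < j)%N) resistance R i j.

Definition add_deg_kirchhoff (R : fieldType) (G : graph) : R :=
  \sum_(i < nv G) \sum_(j < nv G | (i < j)%N)
     ((deg i + deg j)%:R * resistance R i j).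

Definition mul_deg_kirchhoff (R : fieldType) (G : graph) : R :=
  \sum_(i < nv G) \sum_(j < nv G | (i < j)%N)
     ((deg i * deg j)%:R * resistance R i j).

(* Let X be the pseudo-inverse of the Laplacian L. Resistances are values of the
   quadratic form q(b) = b X b^T on the loads e_p - e_q, and q(b) = w.b whenever b = w L.
   For a zero-sum load b on S(G), sending half of the load of each new vertex to each end
   of its edge gives a load P b on G; from a potential v of P b one writes down a potential
   of b on S(G), namely 2 v on old vertices and v(a) + v(c) + b_e/2 on the vertex of the
   edge e = ac, whence q_S(b) = 2 q_G(P b) + 1/2 sum_e b_e^2. This expresses every
   resistance of S(G) through those of G, and summing turns R, R^+ and R^* of S(G) into
   linear combinations of those of G, of n, m, and of sum_{ij in E} Omega_ij. The last sum
   is n - 1 (Foster's theorem: tr (L X) = n - 1) and this is preserved by subdivision, so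
   the recurrences can be iterated and solved. *)

From HB Require Import structures.
From mathcomp Require Import all_boot all_order all_algebra.
From mathcomp Require Import ring lra.
Set Implicit Arguments. Unset Strict Implicit. Unset Printing Implicit Defensive.
Import Order.TTheory GRing.Theory Num.Theory.
Local Open Scope ring_scope.

Lemma sumr_only (R : nmodType) (I : finType) (x : I) (F : I -> R) :
  (forall i, i != x -> F i = 0) -> \sum_i F i = F x.
Proof. by move=> F0; rewrite (bigD1 x) //= big1 ?addr0 // => i; apply: F0. Qed.
Arguments sumr_only {R I} x {F}.

Lemma sumr_eq_natl (R : pzSemiRingType) (I : finType) (x : I) (F : I -> R) :
  \sum_i (i == x)%:R * F i = F x.
Proof.
by rewrite (sumr_only x) ?eqxx ?mul1r // => i /negbTE->; rewrite mul0r.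
Qed.

Lemma sumr_eq_nat (R : pzSemiRingType) (I : finType) (x : I) :
  \sum_i (i == x)%:R = 1 :> R.
Proof.
by rewrite -[RHS](sumr_eq_natl x (fun _ => 1)); apply: eq_bigr => i _; rewrite mulr1.
Qed.

Lemma sumr_const_ord (R : pzSemiRingType) (n : nat) (c : R) :
  \sum_(i < n) c = n%:R * c.
Proof. by rewrite sumr_const card_ord mulr_natl. Qed.

Lemma natr_eq_or (R : pzSemiRingType) (T : eqType) (x a b : T) : a != b ->
  ((x == a) || (x == b))%:R = (x == a)%:R + (x == b)%:R :> R.
Proof.
by move=> neq_ab; have [->|] := eqVneq x a; rewrite ?(negbTE neq_ab) ?addr0 ?add0r.
Qed.

Lemma sum_ltn_sym (R : nmodType) (n : nat) (F : 'I_n -> 'I_n -> R) :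
  (forall i j, F i j = F j i) -> (forall i : 'I_n, F i i = 0) ->
  (\sum_(i < n) \sum_(j < n | (i < j)%N) F i j) *+ 2 = \sum_i \sum_j F i j.
Proof.
move=> FC F0; rewrite mulr2n [X in X + _](exchange_big_dep predT) //=.
rewrite -big_split; apply: eq_bigr => i _ /=.
rewrite (eq_bigr (F i)) => [|j _]; last exact: FC.
rewrite [X in X + _]big_mkcond [X in _ + X]big_mkcond -big_split /=.
apply: eq_bigr => j _; case: ltngtP => [||/val_inj->] //=; by rewrite ?addr0 ?add0r ?F0.
Qed.

Section Edges.
Variables (R : comPzSemiRingType) (G : graph).
Local Notation n := (nv G).
Local Notation m := #|edges G|.

Lemma deg_natr (x : 'I_n) : (deg x)%:R = \sum_y (adj G x y)%:R :> R.
Proof.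
rewrite /deg -sum1_card natr_sum big_mkcond /=; apply: eq_bigr => y _.
by rewrite inE; case: (adj G x y).
Qed.

Definition efst (e : 'I_m) : 'I_n := (enum_val e).1.
Definition esnd (e : 'I_m) : 'I_n := (enum_val e).2.

Lemma efst_neq_esnd e : efst e != esnd e.
Proof.
have := enum_valP e; rewrite inE => /andP[lt_e _].
by apply: contraTneq lt_e; rewrite /efst /esnd => ->; rewrite ltnn.
Qed.

Definition incid (x : 'I_n) (e : 'I_m) : R := (x == efst e)%:R + (x == esnd e)%:R.

Lemma sum_incid_mul e (f : 'I_n -> R) : \sum_x incid x e * f x = f (efst e) + f (esnd e).
Proof. by under eq_bigr do rewrite mulrDl; rewrite big_split /= !sumr_eq_natl. Qed.

Lemma sum_incid e : \sum_x incid x e = 2.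
Proof.
by under eq_bigr do rewrite -[incid _ _]mulr1; rewrite sum_incid_mul [RHS]mulr2n.
Qed.

Hypotheses (symG : symmetric (adj G)) (irrG : irreflexive (adj G)).

Lemma sum_edges_adj (h : 'I_n -> 'I_n -> R) :
  \sum_e (h (efst e) (esnd e) + h (esnd e) (efst e)) =
  \sum_x \sum_y (adj G x y)%:R * h x y.
Proof.
have edges_sum (F : 'I_n -> 'I_n -> R) : \sum_(p in edges G) F p.1 p.2 =
    \sum_(x : 'I_n) \sum_(y : 'I_n) ((x < y)%N && adj G x y)%:R * F x y.
  rewrite pair_big /= big_mkcond; apply: eq_bigr => [[x y]] _; rewrite inE /=.
  by case: (_ && _); rewrite ?mul1r ?mul0r.
rewrite /efst /esnd -(big_enum_val (fun p : 'I_n * 'I_n => h p.1 p.2 + h p.2 p.1)).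
rewrite big_split /= edges_sum (edges_sum (fun x y => h y x)) [X in _ + X]exchange_big.
rewrite -big_split; apply: eq_bigr => x _.
rewrite -big_split; apply: eq_bigr => y _ /=; rewrite (symG y x).
by case: ltngtP => [||/val_inj->]; rewrite ?irrG /= ?mul0r ?mul1r ?addr0 ?add0r.
Qed.

Lemma sum_edges_ends (g : 'I_n -> R) :
  \sum_e (g (efst e) + g (esnd e)) = \sum_x (deg x)%:R * g x.
Proof.
rewrite (sum_edges_adj (fun u _ => g u)); apply: eq_bigr => x _.
by rewrite -mulr_suml deg_natr.
Qed.

Lemma sum_deg : \sum_(x : 'I_n) (deg x)%:R = 2 * m%:R :> R.
Proof.
under eq_bigr do rewrite deg_natr; under eq_bigr do under eq_bigr do rewrite -[_%:R]mulr1.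
by rewrite -(sum_edges_adj (fun _ _ => 1)) sumr_const card_ord [RHS]mulr_natr mulr2n.
Qed.

Lemma sum_edges_incid x (F : 'I_n -> 'I_n -> R) : (forall u v, F u v = F v u) ->
  \sum_e incid x e * F (efst e) (esnd e) = \sum_y (adj G x y)%:R * F x y.
Proof.
move=> FC; rewrite (eq_bigr (fun e => (x == efst e)%:R * F (efst e) (esnd e)
                               + (x == esnd e)%:R * F (esnd e) (efst e))) => [|e _].
  rewrite (sum_edges_adj (fun u v => (x == u)%:R * F u v)) (sumr_only x) => [|u /negbTE xu].
    by apply: eq_bigr => y _; rewrite eqxx mul1r.
  by apply: big1 => y _; rewrite eq_sym xu mul0r mulr0.
by rewrite /incid mulrDl [F (esnd e) _]FC.
Qed.

Lemma sum_incid_deg x : \sum_e incid x e = (deg x)%:R.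
Proof.
transitivity (\sum_e incid x e * (fun _ _ => 1) (efst e) (esnd e)).
  by apply: eq_bigr => e _; rewrite mulr1.
by rewrite (@sum_edges_incid x (fun _ _ => 1)) // deg_natr; apply: eq_bigr => y _; rewrite mulr1.
Qed.

End Edges.

Section Resistance.
Variables (R : fieldType) (G : graph).
Local Notation n := (nv G).
Local Notation L := (lap R G).
Local Notation X := (pinvmx L).
Local Notation Om := (@resistance R G).

Lemma lapE (i j : 'I_n) : L i j = (i == j)%:R * (deg i)%:R - (adj G i j)%:R.
Proof. by rewrite mxE. Qed.

Lemma resistanceE (i j : 'I_n) : Om i j = X i i + X j j - X i j - X j i.
Proof. by rewrite /resistance mulmxBl -!rowE !mxE; ring. Qed.

Lemma resistanceC (i j : 'I_n) : Om i j = Om j i.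
Proof. by rewrite !resistanceE; ring. Qed.

Lemma resistancexx (i : 'I_n) : Om i i = 0.
Proof. by rewrite resistanceE; ring. Qed.

Definition qform (b : 'I_n -> R) : R := \sum_i \sum_j b i * b j * X i j.

Lemma eq_qform b b' : b =1 b' -> qform b = qform b'.
Proof. by move=> eq_b; apply: eq_bigr => i _; apply: eq_bigr => j _; rewrite !eq_b. Qed.

Lemma qform_comb (s : seq (R * 'I_n)) :
  qform (fun i => \sum_(c <- s) c.1 * (i == c.2)%:R) =
  \sum_(c <- s) \sum_(d <- s) c.1 * d.1 * X c.2 d.2.
Proof.
have comb (f : 'I_n -> R) :
    \sum_i (\sum_(c <- s) c.1 * (i == c.2)%:R) * f i = \sum_(c <- s) c.1 * f c.2.
  under eq_bigr do rewrite mulr_suml; rewrite exchange_big /=.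
  by apply: eq_bigr => c _; under eq_bigr do rewrite -mulrA; rewrite -mulr_sumr sumr_eq_natl.
rewrite /qform; under eq_bigr do (under eq_bigr do rewrite -mulrA; rewrite -mulr_sumr).
rewrite (comb (fun i => \sum_j _ * X i j)); apply: eq_bigr => c _.
by rewrite comb mulr_sumr; apply: eq_bigr => d _; ring.
Qed.

Lemma resistance_qform (p q : 'I_n) :
  Om p q = qform (fun i => (i == p)%:R - (i == q)%:R).
Proof.
rewrite (@eq_qform _ (fun i => \sum_(c <- [:: (1, p); (-1, q)]) c.1 * (i == c.2)%:R)).
  by rewrite qform_comb !big_cons !big_nil /= resistanceE; ring.
by move=> i; rewrite !big_cons big_nil /=; ring.
Qed.

Lemma sumr_delta (p q : 'I_n) : \sum_i ((i == p)%:R - (i == q)%:R) = 0 :> R.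
Proof. by rewrite sumrB !sumr_eq_nat subrr. Qed.

Definition res_sum : R := \sum_x \sum_y Om x y.
Definition deg_res_sum : R := \sum_x \sum_y (deg x)%:R * Om x y.
Definition degdeg_res_sum : R :=
  \sum_x \sum_y (deg x)%:R * (deg y)%:R * Om x y.
Definition adj_res_sum : R := \sum_x \sum_y (adj G x y)%:R * Om x y.
Definition deg_res_row (x : 'I_n) : R := \sum_y (deg y)%:R * Om x y.

Definition lap_solvable := forall b : 'I_n -> R, \sum_i b i = 0 ->
  exists w : 'I_n -> R, forall x, b x = \sum_y w y * L y x.

Hypothesis symG : symmetric (adj G).

Lemma lap_sym (i j : 'I_n) : L i j = L j i.
Proof. by rewrite !lapE eq_sym symG; case: eqP => [->|]; rewrite ?mul0r. Qed.

Lemma sum_mul_lap (v : 'I_n -> R) x :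
  \sum_y v y * L y x = v x * (deg x)%:R - \sum_y (adj G x y)%:R * v y.
Proof.
under eq_bigr do rewrite lapE mulrBr.
rewrite sumrB (sumr_only x) => [|y /negbTE->]; last by rewrite mul0r mulr0.
by rewrite eqxx mul1r; congr (_ - _); apply: eq_bigr => y _; rewrite symG mulrC.
Qed.

(* [b] lies in the row space of [L], so [b X] is a potential for it: [b X L = b]. *)
Lemma qform_potential (w b : 'I_n -> R) :
  (forall x, b x = \sum_y w y * L y x) -> qform b = \sum_x w x * b x.
Proof.
move=> bE; pose bm : 'rV[R]_n := \row_x b x.
have bmE : bm = (\row_x w x) *m L.
  by apply/rowP => x; rewrite !mxE bE; apply: eq_bigr => y _; rewrite !mxE.
have XL : bm *m X *m L = bm by rewrite mulmxKpV // bmE submxMl.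
transitivity (\sum_j b j * (bm *m X) 0 j).
  rewrite /qform exchange_big; apply: eq_bigr => j _; rewrite !mxE mulr_sumr.
  by apply: eq_bigr => i _; rewrite !mxE; ring.
under eq_bigr do rewrite bE mulr_suml.
rewrite exchange_big; apply: eq_bigr => x _.
have -> : b x = (bm *m X *m L) 0 x by rewrite XL mxE.
rewrite mxE mulr_sumr.
by apply: eq_bigr => j _; rewrite lap_sym; ring.
Qed.

Lemma lap_col_sum j : \sum_i L i j = 0.
Proof.
under eq_bigr do rewrite -[L _ j]mul1r.
by rewrite sum_mul_lap /= mul1r deg_natr; under eq_bigr do rewrite mulr1; rewrite subrr.
Qed.

Lemma lap_energy (u : 'I_n -> R) :
  \sum_i \sum_j (adj G i j)%:R * (u i - u j) ^+ 2 =
  2 * \sum_i u i * \sum_j u j * L j i.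
Proof.
under [in RHS]eq_bigr do rewrite sum_mul_lap.
have adj_sq : \sum_i \sum_j (adj G i j)%:R * u j ^+ 2 =
              \sum_i \sum_j (adj G i j)%:R * u i ^+ 2.
  by rewrite exchange_big; apply: eq_bigr => i _; apply: eq_bigr => j _; rewrite symG.
transitivity (\sum_i \sum_j (adj G i j)%:R * u i ^+ 2
              + \sum_i \sum_j (adj G i j)%:R * u j ^+ 2
              - 2 * \sum_i u i * \sum_j (adj G i j)%:R * u j).
  rewrite mulr_sumr -big_split -sumrB /=; apply: eq_bigr => i _.
  by rewrite !mulr_sumr -big_split -sumrB; apply: eq_bigr => j _ /=; ring.
rewrite adj_sq [RHS]mulr_sumr [in X in _ - X]mulr_sumr -big_split -sumrB /=.
apply: eq_bigr => i _.
by rewrite deg_natr -mulr_suml; ring.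
Qed.

Lemma adj_res_sum_trace : adj_res_sum = 2 * \tr (L *m X).
Proof.
have sum_adj (f : 'I_n -> R) :
    \sum_i \sum_j (adj G i j)%:R * f i = \sum_i (deg i)%:R * f i.
  by apply: eq_bigr => i _; rewrite deg_natr mulr_suml.
have adjC (F : 'I_n -> 'I_n -> R) :
    \sum_i \sum_j (adj G i j)%:R * F i j = \sum_i \sum_j (adj G i j)%:R * F j i.
  by rewrite exchange_big; apply: eq_bigr => i _; apply: eq_bigr => j _; rewrite symG.
have trE : \tr (L *m X) = \sum_i ((deg i)%:R * X i i - \sum_j (adj G i j)%:R * X j i).
  apply: eq_bigr => i _; rewrite mxE (eq_bigr (fun j => X j i * L j i)).
    by rewrite sum_mul_lap mulrC.
  by move=> j _; rewrite lap_sym mulrC.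
rewrite /adj_res_sum trE mulr_sumr.
under eq_bigr do under eq_bigr do rewrite resistanceE mulrBr mulrBr mulrDr.
under eq_bigr do rewrite !(sumrB, big_split) /=.
rewrite !(sumrB, big_split) /= sum_adj (adjC (fun i j => X j j)) sum_adj.
by rewrite (adjC (fun i j => X i j)) -mulr_sumr sumrB; ring.
Qed.

End Resistance.

Section Connected.
Variables (R : realFieldType) (G : graph).
Hypotheses (symG : symmetric (adj G)) (conG : connected G).
Local Notation n := (nv G).
Local Notation L := (lap R G).

Lemma lap_kernel_const (u : 'I_n -> R) :
  (forall j, \sum_i u i * L i j = 0) -> forall i i', u i = u i'.
Proof.
move=> uL.
have energy0 : \sum_i \sum_j (adj G i j)%:R * (u i - u j) ^+ 2 = 0.
  by rewrite lap_energy // big1 ?mulr0 // => i _; rewrite uL mulr0.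
have term_ge0 i j : 0 <= (adj G i j)%:R * (u i - u j) ^+ 2 by rewrite mulr_ge0 ?sqr_ge0.
have adj_eq i j : adj G i j -> u i = u j.
  move=> aij; apply/eqP; rewrite -subr_eq0 -sqrf_eq0.
  have row0 := psumr_eq0P (fun i _ => sumr_ge0 _ (fun j _ => term_ge0 i j)) energy0 (i := i) isT.
  by have := psumr_eq0P (fun j _ => term_ge0 i j) row0 (i := j) isT; rewrite aij mul1r => ->.
move=> i i'; case/connectP: (conG i i') => p + ->.
by elim: p i => [|a p IH] i //= /andP[/adj_eq-> /IH].
Qed.

Lemma lap_solvable_connected : lap_solvable R G.
Proof.
move=> b b0; pose bm : 'rV[R]_n := \row_i b i.
suff /mulmxKpV bmE : (bm <= L)%MS.
  exists (fun y => (bm *m pinvmx L) 0 y) => x.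
  have -> : b x = (bm *m pinvmx L *m L) 0 x by rewrite bmE mxE.
  by rewrite mxE.
rewrite submxE; apply/eqP/rowP => j; rewrite !mxE.
have coker_const k k' : cokermx L k j = cokermx L k' j.
  apply: (lap_kernel_const (u := fun k => cokermx L k j)) => i.
  transitivity ((L *m cokermx L) i j); last by rewrite mulmx_coker mxE.
  by rewrite mxE; apply: eq_bigr => l _; rewrite lap_sym // mulrC.
case: (pickP (@predT 'I_n)) => [i0 _|n0]; last by rewrite big_pred0.
by under eq_bigr do rewrite mxE (coker_const _ i0); rewrite -mulr_suml b0 mul0r.
Qed.

(* The rows of [L X - 1] lie in the left kernel of [L], hence are constant, while the
   columns of [L X] sum to zero. *)
Lemma trace_lap_pinv : (0 < n)%N -> \tr (L *m pinvmx L) = n%:R - 1.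
Proof.
move=> n_gt0; pose i0 := Ordinal n_gt0; set P := L *m pinvmx L.
have PL i j : \sum_k P i k * L k j = L i j.
  by rewrite -[in RHS](mulmxKpV (submx_refl L)) mxE.
have row_const i k : P i k - (k == i)%:R = P i i0 - (i0 == i)%:R.
  apply: (lap_kernel_const (u := fun k => P i k - (k == i)%:R)) => j.
  by under eq_bigr do rewrite mulrBl; rewrite sumrB sumr_eq_natl PL subrr.
have col0 k : \sum_i P i k = 0.
  under eq_bigr do rewrite mxE; rewrite exchange_big big1 // => l _.
  by rewrite -mulr_suml lap_col_sum // mul0r.
rewrite /mxtrace (eq_bigr (fun i => P i i0 - (i0 == i)%:R + 1)) => [|i _]; last first.
  by rewrite -(row_const i i) eqxx subrK.
rewrite big_split /= sumrB col0 (eq_bigr (fun i => (i == i0)%:R)) => [|i _]; last first.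
  by rewrite eq_sym.
by rewrite sumr_eq_nat sumr_const_ord mulr1 add0r addrC.
Qed.

Lemma adj_res_sum_connected : (0 < n)%N -> adj_res_sum R G = 2 * (n%:R - 1).
Proof. by move=> n_gt0; rewrite adj_res_sum_trace // trace_lap_pinv. Qed.

End Connected.

Section SubdivisionGraph.
Variable G : graph.
Local Notation n := (nv G).
Local Notation m := #|edges G|.
Local Notation S := (subdiv G).

Lemma split_lshift (x : 'I_n) : split (lshift m x) = inl x.
Proof. exact: (unsplitK (inl x)). Qed.

Lemma split_rshift (e : 'I_m) : split (rshift n e) = inr e.
Proof. exact: (unsplitK (inr e)). Qed.

Lemma adj_sub_oo x y : adj S (lshift m x) (lshift m y) = false.
Proof. by rewrite /= /sub_adj !split_lshift. Qed.

Lemma adj_sub_nn e f : adj S (rshift n e) (rshift n f) = false.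
Proof. by rewrite /= /sub_adj !split_rshift. Qed.

Lemma adj_sub_on x e : adj S (lshift m x) (rshift n e) = (x == efst e) || (x == esnd e).
Proof. by rewrite /= /sub_adj split_lshift split_rshift. Qed.

Lemma adj_sub_no e x : adj S (rshift n e) (lshift m x) = (x == efst e) || (x == esnd e).
Proof. by rewrite /= /sub_adj split_lshift split_rshift. Qed.

Lemma sub_vertex_ind (P : 'I_(nv S) -> Prop) :
  (forall x, P (lshift m x)) -> (forall e, P (rshift n e)) -> forall p, P p.
Proof. by move=> Po Pn p; rewrite -(splitK p); case: (split p). Qed.

Lemma sum_sub_vertices (R : nmodType) (F : 'I_(nv S) -> R) :
  \sum_p F p = \sum_x F (lshift m x) + \sum_e F (rshift n e).
Proof. exact: big_split_ord. Qed.

Lemma sum2_sub_vertices (R : nmodType) (F : 'I_(nv S) -> 'I_(nv S) -> R) :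
  \sum_p \sum_q F p q =
  \sum_x \sum_y F (lshift m x) (lshift m y) + \sum_x \sum_e F (lshift m x) (rshift n e)
  + \sum_e \sum_y F (rshift n e) (lshift m y) + \sum_e \sum_f F (rshift n e) (rshift n f).
Proof.
under eq_bigr do rewrite sum_sub_vertices.
by rewrite sum_sub_vertices !big_split /= !addrA.
Qed.

Lemma sub_symmetric : symmetric (adj S).
Proof. by move=> p q; rewrite /= /sub_adj; case: (split p); case: (split q). Qed.

Lemma sub_irreflexive : irreflexive (adj S).
Proof. by move=> p; rewrite /= /sub_adj; case: (split p). Qed.

Lemma deg_sub_new e : deg (rshift n e : 'I_(nv S)) = 2.
Proof.
rewrite /deg (_ : [set p | _] = [set lshift m (efst e); lshift m (esnd e)]).
  by rewrite cards2 (inj_eq (@lshift_inj _ _)) efst_neq_esnd.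
apply/setP => p; move: p; apply: sub_vertex_ind => [x|f].
  by rewrite !inE adj_sub_no !(inj_eq (@lshift_inj _ _)).
by rewrite !inE adj_sub_nn !eq_rlshift.
Qed.

Hypotheses (symG : symmetric (adj G)) (irrG : irreflexive (adj G)).

Lemma deg_sub_old x : deg (lshift m x : 'I_(nv S)) = deg x.
Proof.
apply/eqP; rewrite -(eqr_nat rat); apply/eqP; rewrite deg_natr sum_sub_vertices.
under eq_bigr do rewrite adj_sub_oo.
under [X in _ + X]eq_bigr do rewrite adj_sub_on natr_eq_or ?efst_neq_esnd // -/(incid _ _).
by rewrite big1 // add0r sum_incid_deg.
Qed.

Lemma card_edges_sub : #|edges S| = (2 * m)%N.
Proof.
apply/eqP; rewrite -(eqr_nat rat); apply/eqP; rewrite natrM.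
have := sum_deg rat sub_symmetric sub_irreflexive; rewrite sum_sub_vertices.
under eq_bigr do rewrite deg_sub_old; under [X in _ + X]eq_bigr do rewrite deg_sub_new.
by rewrite sum_deg // sumr_const_ord => h; lra.
Qed.

End SubdivisionGraph.

Section SubdivisionResistance.
Variables (R : numFieldType) (G : graph).
Hypotheses (symG : symmetric (adj G)) (irrG : irreflexive (adj G)).
Local Notation n := (nv G).
Local Notation m := #|edges G|.
Local Notation S := (subdiv G).
Local Notation L := (lap R G).
Local Notation LS := (lap R S).
Local Notation incid := (@incid R G).

Lemma lap_sub_oo y x : LS (lshift m y) (lshift m x) = (y == x)%:R * (deg x)%:R.
Proof.
rewrite lapE adj_sub_oo subr0 eq_lshift.
by case: eqVneq => [->|]; rewrite ?deg_sub_old ?mul0r.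
Qed.

Lemma lap_sub_no e x : LS (rshift n e) (lshift m x) = - incid x e.
Proof. by rewrite lapE adj_sub_no eq_rlshift mul0r sub0r natr_eq_or ?efst_neq_esnd. Qed.

Lemma lap_sub_on x e : LS (lshift m x) (rshift n e) = - incid x e.
Proof. by rewrite lapE adj_sub_on eq_lrshift mul0r sub0r natr_eq_or ?efst_neq_esnd. Qed.

Lemma lap_sub_nn f e : LS (rshift n f) (rshift n e) = (f == e)%:R * 2.
Proof.
by rewrite lapE adj_sub_nn subr0 eq_rshift; case: eqVneq => [->|]; rewrite ?deg_sub_new ?mul0r.
Qed.

Definition push_load (b : 'I_(nv S) -> R) (x : 'I_n) : R :=
  b (lshift m x) + 2^-1 * \sum_e incid x e * b (rshift n e).

Lemma sum_push_load b : \sum_x push_load b x = \sum_p b p.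
Proof.
rewrite sum_sub_vertices big_split /=; congr (_ + _).
rewrite -mulr_sumr exchange_big /=.
under eq_bigr do rewrite -mulr_suml sum_incid.
by rewrite -mulr_sumr mulKf ?pnatr_eq0.
Qed.

Definition sub_potential (v : 'I_n -> R) (b : 'I_(nv S) -> R) (p : 'I_(nv S)) : R :=
  match split p with
  | inl x => 2 * v x
  | inr e => v (efst e) + v (esnd e) + b (rshift n e) / 2
  end.

Lemma sub_potential_old v b x : sub_potential v b (lshift m x) = 2 * v x.
Proof. by rewrite /sub_potential split_lshift. Qed.

Lemma sub_potential_new v b e :
  sub_potential v b (rshift n e) = v (efst e) + v (esnd e) + b (rshift n e) / 2.
Proof. by rewrite /sub_potential split_rshift. Qed.

Lemma sub_potentialP (v : 'I_n -> R) (b : 'I_(nv S) -> R) :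
  (forall x, push_load b x = \sum_y v y * L y x) ->
  forall p, b p = \sum_q sub_potential v b q * LS q p.
Proof.
move=> vP; apply: sub_vertex_ind => [x|e]; rewrite sum_sub_vertices.
- rewrite (sumr_only x) => [|y /negbTE yx]; last by rewrite lap_sub_oo yx mul0r mulr0.
  rewrite sub_potential_old lap_sub_oo eqxx mul1r.
  under eq_bigr do rewrite sub_potential_new lap_sub_no mulrN mulrC mulrDr mulrA.
  rewrite sumrN big_split /= -mulr_suml.
  rewrite (@sum_edges_incid _ _ symG irrG x _ (fun u w => addrC (v u) (v w))).
  under eq_bigr do rewrite mulrDr.
  rewrite big_split /= -mulr_suml -deg_natr.
  have := vP x; rewrite sum_mul_lap // /push_load => pushE.
  by rewrite -[b _](addrK (2^-1 * \sum_e incid x e * b (rshift n e))) pushE; ring.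
- rewrite [X in _ + X](sumr_only e) => [|f /negbTE fe]; last first.
    by rewrite lap_sub_nn fe mul0r mulr0.
  under eq_bigr do rewrite sub_potential_old lap_sub_on mulrN mulrC.
  rewrite sumrN sum_incid_mul sub_potential_new lap_sub_nn eqxx mul1r.
  by field.
Qed.

Hypothesis solG : lap_solvable R G.

Lemma lap_solvable_sub : lap_solvable R S.
Proof.
move=> b b0; have [v vP] := solG (etrans (sum_push_load b) b0).
by exists (sub_potential v b); apply: sub_potentialP.
Qed.

Lemma qform_sub (b : 'I_(nv S) -> R) : \sum_p b p = 0 ->
  qform b = 2 * qform (push_load b) + 2^-1 * \sum_e b (rshift n e) ^+ 2.
Proof.
move=> b0; have [v vP] := solG (etrans (sum_push_load b) b0).
rewrite (qform_potential (@sub_symmetric G) (sub_potentialP vP)) (qform_potential symG vP).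
have cross : \sum_x v x * (2^-1 * \sum_e incid x e * b (rshift n e)) =
             2^-1 * \sum_e (v (efst e) + v (esnd e)) * b (rshift n e).
  under eq_bigr do rewrite mulrCA mulr_sumr; rewrite -mulr_sumr exchange_big /=.
  congr (_ * _); apply: eq_bigr => e _; rewrite -sum_incid_mul mulr_suml.
  by apply: eq_bigr => x _; ring.
rewrite sum_sub_vertices /push_load.
under eq_bigr do rewrite sub_potential_old.
under [X in _ + X]eq_bigr do rewrite sub_potential_new mulrDl.
under [in RHS]eq_bigr do rewrite mulrDr.
rewrite !big_split /= cross.
under eq_bigr do rewrite -mulrA.
under [X in _ + (_ + X)]eq_bigr do rewrite mulrAC -expr2 mulrC.
by rewrite -!mulr_sumr; field.
Qed.

Local Notation Om := (@resistance R G).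
Local Notation OmS := (@resistance R S).
Local Notation comb s := (fun i => \sum_(c <- s) c.1 * (i == c.2)%:R).

Lemma resistance_sub_oo x y : OmS (lshift m x) (lshift m y) = 2 * Om x y.
Proof.
rewrite resistance_qform qform_sub ?sumr_delta //.
rewrite big1 => [|e _]; last by rewrite !eq_rlshift subrr expr0n.
rewrite (resistance_qform _ x y) mulr0 addr0; congr (_ * _); apply: eq_qform => z.
rewrite /push_load big1 => [|e _]; last by rewrite !eq_rlshift subrr mulr0.
by rewrite !eq_lshift mulr0 addr0.
Qed.

Lemma resistance_sub_on x e :
  OmS (lshift m x) (rshift n e) =
  Om x (efst e) + Om x (esnd e) - Om (efst e) (esnd e) / 2 + 2^-1.
Proof.
rewrite resistance_qform qform_sub ?sumr_delta //.
rewrite (@eq_qform _ _ _ (comb [:: (1, x); (- 2^-1, efst e); (- 2^-1, esnd e)])).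
  rewrite qform_comb !big_cons !big_nil /= (sumr_only e) => [|f /negbTE fe]; last first.
    by rewrite eq_rlshift eq_rshift fe subrr expr0n.
  by rewrite eq_rlshift eq_rshift eqxx !resistanceE /=; field.
move=> z; rewrite /push_load (sumr_only e) => [|f /negbTE fe]; last first.
  by rewrite eq_rlshift eq_rshift fe subrr mulr0.
by rewrite eq_rlshift eq_rshift eqxx eq_lrshift eq_lshift !big_cons big_nil /incid /=; ring.
Qed.

Lemma resistance_sub_nn e f :
  OmS (rshift n e) (rshift n f) =
  (Om (efst e) (efst f) + Om (efst e) (esnd f) + Om (esnd e) (efst f)
     + Om (esnd e) (esnd f)) / 2
  - (Om (efst e) (esnd e) + Om (efst f) (esnd f)) / 2 + 1 - (e == f)%:R.
Proof.
have [<-|ne_ef] := eqVneq e f.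
  by rewrite !resistancexx (resistanceC _ (esnd e)) /=; field.
rewrite subr0 resistance_qform qform_sub ?sumr_delta //.
rewrite (@eq_qform _ _ _ (comb [:: (2^-1, efst e); (2^-1, esnd e);
                                  (- 2^-1, efst f); (- 2^-1, esnd f)])).
  rewrite qform_comb !big_cons !big_nil /=.
  have -> : \sum_g ((rshift n g == rshift n e :> 'I_(nv S))%:R
                   - (rshift n g == rshift n f :> 'I_(nv S))%:R) ^+ 2
            = \sum_g ((g == e)%:R + (g == f)%:R) :> R.
    apply: eq_bigr => g _; rewrite !eq_rshift.
    have [->|_] := eqVneq g e; first by rewrite (negbTE ne_ef) /=; ring.
    by case: eqVneq => _ /=; ring.
  by rewrite big_split /= !sumr_eq_nat !resistanceE; field.
move=> z; rewrite /push_load !eq_lrshift subrr add0r.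
under eq_bigr do rewrite !eq_rshift mulrBr ![incid _ _ * _]mulrC.
by rewrite sumrB !sumr_eq_natl !big_cons big_nil /incid /=; ring.
Qed.

Local Notation F := (adj_res_sum R G).
Local Notation D := (@deg_res_row R G).

Lemma sum_edges_res : \sum_e Om (efst e) (esnd e) = F / 2.
Proof.
rewrite /adj_res_sum -(sum_edges_adj symG irrG Om).
under [in RHS]eq_bigr do rewrite [Om (esnd _) _]resistanceC -mulr2n.
by rewrite sumrMnl -mulr_natr; field.
Qed.

Lemma sum_res_on x : \sum_e OmS (lshift m x) (rshift n e) = D x - F / 4 + m%:R / 2.
Proof.
under eq_bigr do rewrite resistance_sub_on mulrC.
rewrite big_split sumrB /= (sum_edges_ends symG irrG) -mulr_sumr sum_edges_res.
by rewrite sumr_const_ord /deg_res_row; field.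
Qed.

Lemma sum_res_nn :
  \sum_e \sum_f OmS (rshift n e) (rshift n f) =
  degdeg_res_sum R G / 2 - m%:R * F / 2 + m%:R ^+ 2 - m%:R.
Proof.
pose w e := Om (efst e) (esnd e).
pose P e f := Om (efst e) (efst f) + Om (efst e) (esnd f) + Om (esnd e) (efst f)
              + Om (esnd e) (esnd f).
have row e : \sum_f P e f = D (efst e) + D (esnd e).
  rewrite (eq_bigr (fun f => (Om (efst e) (efst f) + Om (efst e) (esnd f))
                           + (Om (esnd e) (efst f) + Om (esnd e) (esnd f)))) => [|f _].
    rewrite big_split /= (sum_edges_ends symG irrG (Om (efst e))).
    by rewrite (sum_edges_ends symG irrG (Om (esnd e))).
  by rewrite /P !addrA.
have col : \sum_e (D (efst e) + D (esnd e)) = degdeg_res_sum R G.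
  rewrite (sum_edges_ends symG irrG D); apply: eq_bigr => x _.
  by rewrite /deg_res_row mulr_sumr; apply: eq_bigr => y _; rewrite mulrA.
under eq_bigr do under eq_bigr do rewrite resistance_sub_nn.
transitivity (\sum_e ((D (efst e) + D (esnd e)) / 2 - m%:R / 2 * w e + (m%:R - 1 - F / 4))).
  apply: eq_bigr => e _.
  rewrite (eq_bigr (fun f => P e f / 2 + (1 - w e / 2) - w f / 2 - (f == e)%:R)) => [|f _].
    rewrite sumrB sumrB big_split /= -!mulr_suml row sum_edges_res sumr_eq_nat.
    by rewrite sumr_const_ord; field.
  by rewrite eq_sym /P /w; field.
rewrite big_split sumrB /= -mulr_suml col -mulr_sumr sum_edges_res sumr_const_ord.
by field.
Qed.

Lemma sum_weighted_res_sub (a b : 'I_(nv S) -> R) (g h : 'I_n -> R) (c c' : R) :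
  (forall x, a (lshift m x) = g x) -> (forall e, a (rshift n e) = c) ->
  (forall x, b (lshift m x) = h x) -> (forall e, b (rshift n e) = c') ->
  \sum_p \sum_q a p * b q * OmS p q =
  2 * (\sum_x \sum_y g x * h y * Om x y)
  + c' * \sum_x g x * (D x - F / 4 + m%:R / 2)
  + c * \sum_y h y * (D y - F / 4 + m%:R / 2)
  + c * c' * (degdeg_res_sum R G / 2 - m%:R * F / 2 + m%:R ^+ 2 - m%:R).
Proof.
move=> ao an bo bn; rewrite sum2_sub_vertices; congr (_ + _ + _ + _).
- rewrite mulr_sumr; apply: eq_bigr => x _; rewrite mulr_sumr; apply: eq_bigr => y _.
  by rewrite ao bo resistance_sub_oo; ring.
- rewrite mulr_sumr; apply: eq_bigr => x _; rewrite -sum_res_on !mulr_sumr.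
  by apply: eq_bigr => e _; rewrite ao bn; ring.
- rewrite exchange_big mulr_sumr; apply: eq_bigr => y _; rewrite -sum_res_on !mulr_sumr.
  by apply: eq_bigr => e _; rewrite an bo resistanceC; ring.
- rewrite -sum_res_nn mulr_sumr; apply: eq_bigr => e _; rewrite mulr_sumr.
  by apply: eq_bigr => f _; rewrite an bn.
Qed.

Lemma adj_res_sum_sub : adj_res_sum R S = F + 2 * m%:R.
Proof.
have on : \sum_x \sum_e (adj S (lshift m x) (rshift n e))%:R * OmS (lshift m x) (rshift n e)
          = F / 2 + m%:R.
  rewrite exchange_big.
  under eq_bigr do under eq_bigr do
    rewrite adj_sub_on natr_eq_or ?efst_neq_esnd // -/(incid _ _).
  under eq_bigr do rewrite sum_incid_mul !resistance_sub_on !resistancexx.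
  rewrite (eq_bigr (fun e => Om (efst e) (esnd e) + 1)) => [|e _].
    by rewrite big_split /= sum_edges_res sumr_const card_ord.
  by rewrite (resistanceC _ (esnd e)); field.
rewrite {1}/adj_res_sum sum2_sub_vertices on.
rewrite big1 => [|x _]; last by apply: big1 => y _; rewrite adj_sub_oo mul0r.
rewrite [X in _ + X]big1 => [|e _]; last by apply: big1 => f _; rewrite adj_sub_nn mul0r.
rewrite (_ : \sum_e _ = F / 2 + m%:R); first by field.
rewrite -on exchange_big; apply: eq_bigr => x _; apply: eq_bigr => e _.
by rewrite adj_sub_no adj_sub_on resistanceC.
Qed.

End SubdivisionResistance.

Section KirchhoffIndices.
Variable R : numFieldType.

Lemma sum_ltn_half (n : nat) (F : 'I_n -> 'I_n -> R) :
  (forall i j, F i j = F j i) -> (forall i, F i i = 0) ->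
  \sum_(i < n) \sum_(j < n | (i < j)%N) F i j = (\sum_i \sum_j F i j) / 2.
Proof. by move=> FC F0; rewrite -sum_ltn_sym // -mulr_natr; field. Qed.

Variable G : graph.
Local Notation Om := (@resistance R G).

Lemma kirchhoffE : kirchhoff R G = res_sum R G / 2.
Proof. by rewrite /kirchhoff sum_ltn_half //; [apply: resistanceC | apply: resistancexx]. Qed.

Lemma add_deg_kirchhoffE : add_deg_kirchhoff R G = deg_res_sum R G.
Proof.
rewrite /add_deg_kirchhoff sum_ltn_half => [|i j|i]; last 2 first.
- by rewrite addnC resistanceC.
- by rewrite resistancexx mulr0.
under eq_bigr do under eq_bigr do rewrite natrD mulrDl.
rewrite (eq_bigr (fun i => \sum_j (deg i)%:R * Om i j + \sum_j (deg j)%:R * Om i j)) => [|i _].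
  rewrite big_split /= [X in _ + X]exchange_big /=.
  under [X in _ + X]eq_bigr do under eq_bigr do rewrite resistanceC.
  by rewrite /deg_res_sum; field.
exact: big_split.
Qed.

Lemma mul_deg_kirchhoffE : mul_deg_kirchhoff R G = degdeg_res_sum R G / 2.
Proof.
rewrite /mul_deg_kirchhoff sum_ltn_half => [|i j|i]; last 2 first.
- by rewrite mulnC resistanceC.
- by rewrite resistancexx mulr0.
by congr (_ / _); do 2!apply: eq_bigr => ? _; rewrite natrM.
Qed.

End KirchhoffIndices.

Section SubdivisionRecurrences.
Variables (R : numFieldType) (G : graph).
Hypotheses (symG : symmetric (adj G)) (irrG : irreflexive (adj G)).
Hypothesis solG : lap_solvable R G.
Local Notation n := ((nv G)%:R : R).
Local Notation m := (#|edges G|%:R : R).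
Local Notation S := (subdiv G).
Local Notation A := (res_sum R G).
Local Notation B := (deg_res_sum R G).
Local Notation C := (degdeg_res_sum R G).
Local Notation F := (adj_res_sum R G).
Local Notation D := (@deg_res_row R G).
Local Notation N := (C / 2 - m * F / 2 + m ^+ 2 - m).

Lemma sum_res_row : \sum_x 1 * (D x - F / 4 + m / 2) = B - n * (F / 4) + n * (m / 2).
Proof.
under eq_bigr do rewrite mul1r.
rewrite big_split sumrB /= !sumr_const_ord; congr (_ - _ + _).
by rewrite exchange_big; do 2!apply: eq_bigr => ? _; rewrite resistanceC.
Qed.

Lemma sum_deg_res_row :
  \sum_x (deg x)%:R * (D x - F / 4 + m / 2) = C - 2 * m * (F / 4) + 2 * m * (m / 2).
Proof.
under eq_bigr do rewrite mulrDr mulrBr.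
rewrite big_split sumrB /= -!mulr_suml sum_deg //; congr (_ - _ + _).
by apply: eq_bigr => x _; rewrite /deg_res_row mulr_sumr; apply: eq_bigr => y _; rewrite mulrA.
Qed.

Lemma res_sum_sub : res_sum R S = 2 * A + 2 * (B - n * (F / 4) + n * (m / 2)) + N.
Proof.
transitivity (\sum_p \sum_q 1 * 1 * @resistance R S p q).
  by rewrite /res_sum; do 2!apply: eq_bigr => ? _; rewrite !mul1r.
rewrite (sum_weighted_res_sub symG irrG solG (g := fun _ => 1) (h := fun _ => 1)
          (c := 1) (c' := 1)) // sum_res_row.
under [X in 2 * X]eq_bigr do under eq_bigr do rewrite !mul1r.
by rewrite -/(res_sum R G); ring.
Qed.

Lemma deg_res_sum_sub : deg_res_sum R S =
  2 * B + (C - 2 * m * (F / 4) + 2 * m * (m / 2))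
  + 2 * (B - n * (F / 4) + n * (m / 2)) + 2 * N.
Proof.
transitivity (\sum_p \sum_q (deg p)%:R * 1 * @resistance R S p q).
  by rewrite /deg_res_sum; do 2!apply: eq_bigr => ? _; rewrite mulr1.
rewrite (sum_weighted_res_sub symG irrG solG (g := fun x => (deg x)%:R) (h := fun _ => 1)
          (c := 2) (c' := 1)) => [|x|e|//|//]; last 2 first.
- by rewrite deg_sub_old.
- by rewrite deg_sub_new.
rewrite sum_res_row sum_deg_res_row.
under [X in 2 * X]eq_bigr do under eq_bigr do rewrite mulr1.
by rewrite -/(deg_res_sum R G); ring.
Qed.

Lemma degdeg_res_sum_sub : degdeg_res_sum R S =
  2 * C + 4 * (C - 2 * m * (F / 4) + 2 * m * (m / 2)) + 4 * N.
Proof.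
rewrite {1}/degdeg_res_sum (sum_weighted_res_sub symG irrG solG (g := fun x => (deg x)%:R)
          (h := fun x => (deg x)%:R) (c := 2) (c' := 2)) => [|x|e|x|e]; last 4 first.
- by rewrite deg_sub_old.
- by rewrite deg_sub_new.
- by rewrite deg_sub_old.
- by rewrite deg_sub_new.
by rewrite sum_deg_res_row -/(degdeg_res_sum R G); ring.
Qed.

End SubdivisionRecurrences.

Lemma kirchhoff_subdiv_iter (R : numFieldType) (k : nat) (G : graph) :
  symmetric (adj G) -> irreflexive (adj G) -> lap_solvable R G ->
  adj_res_sum R G = 2 * ((nv G)%:R - 1) ->
  let n : R := (nv G)%:R in
  let m : R := (ne G)%:R in
  kirchhoff R (subdiv_iter k G) =
    2 ^+ k * kirchhoff R G
    + (4 ^+ k - 2 ^+ k) / 2 * add_deg_kirchhoff R G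
    + (8 ^+ k - 2 * 4 ^+ k + 2 ^+ k) / 4 * mul_deg_kirchhoff R G
    + (8 ^+ k - 2 ^+ k) / 12 * (m * (2 * m - 2 * n + 1))
    - (4 ^+ k - 1) / 6 * ((m - n) * (m - n + 1)).
Proof.
elim: k G => [|k IH] G symG irrG solG FG n m; first by rewrite !expr0; field.
have FS : adj_res_sum R (subdiv G) = 2 * ((nv (subdiv G))%:R - 1).
  by rewrite adj_res_sum_sub // FG /= natrD; ring.
have solS := lap_solvable_sub symG irrG solG.
rewrite /subdiv_iter iterSr (IH _ (@sub_symmetric G) (@sub_irreflexive G) solS FS).
rewrite !kirchhoffE !add_deg_kirchhoffE !mul_deg_kirchhoffE.
rewrite res_sum_sub // deg_res_sum_sub // degdeg_res_sum_sub // /ne card_edges_sub //.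
rewrite /= natrD natrM FG -/n -/m !exprS.
set x := 2 ^+ k; set y := 4 ^+ k; set z := 8 ^+ k.
by field.
Qed.

Theorem theorem3p4 (R : realFieldType) (G : graph) (k : nat) :
  (2 <= nv G)%N -> simple G -> connected G ->
  let n : R := (nv G)%:R in
  let m : R := (ne G)%:R in
  kirchhoff R (subdiv_iter k G) =
    2 ^+ k * kirchhoff R G
    + (4 ^+ k - 2 ^+ k) / 2 * add_deg_kirchhoff R G
    + (8 ^+ k - 2 * 4 ^+ k + 2 ^+ k) / 4 * mul_deg_kirchhoff R G
    + (8 ^+ k - 2 ^+ k) / 12 * (m * (2 * m - 2 * n + 1))
    - (4 ^+ k - 1) / 6 * ((m - n) * (m - n + 1)).
Proof.
move=> n_ge2 [symG irrG] conG.
apply: kirchhoff_subdiv_iter => //; first exact: lap_solvable_connected.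
by apply: adj_res_sum_connected => //; apply: leq_trans n_ge2.
Qed.
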